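(* Let $V$ be a $K$-vector space and let $Moor(V)=V\otimes S(V)$ be the free $Moor$-algebra over $V$, with product determined by $(v\otimes\omega)\prec(v'\otimes 1)=v\otimes(\omega\vee v')$ and $(v\otimes\omega)\prec(v'\otimes\omega')=0$ for $\omega'\in S^n(V)$, $n\geq 1$, graded by $Moor(V)_n=V\otimes S^{n-1}(V)$ for $n\geq 1$. Then $Moor(V)$ can be equipped with a cooperation making it a connected $Moor$-bialgebra.
   Context: $K$ is a field of characteristic zero; $S(V)=K\oplus\bigoplus_{n>0}S^n(V)$ is the symmetric algebra with product $\vee$, and $1\in K=S^0(V)$; $\tau$ is the flip map. A $Moor$-bialgebra is a graded vector space $\mathcal{H}=\bigoplus_{p>0}\mathcal{H}_p$ with a bilinear operation $\prec$ satisfying $\mathcal{H}_p\prec\mathcal{H}_q\subseteq\mathcal{H}_{p+q}$, $(x\prec y)\prec z=(x\prec z)\prec y$ and $x\prec(y\prec z)=0$, together with a linear map $\Delta:\mathcal{H}\to\mathcal{H}\otimes\mathcal{H}$ (Sweedler notation $\Delta(x)=x_{(1)}\otimes x_{(2)}$) satisfying $(\mathrm{id}\otimes\Delta)\Delta=0$, $(\Delta\otimes\mathrm{id})\Delta=(\mathrm{id}\otimes\tau)(\Delta\otimes\mathrm{id})\Delta$, and $\Delta(x\prec y)=x\otimes e(y)+(x_{(1)}\prec y)\otimes x_{(2)}$ for all $x,y$, where $e:\mathcal{H}\to\mathcal{H}_1$ is the canonical projection. Set $\Delta^{(1)}=\Delta$ and $\Delta^{(r)}=(\Delta\otimes\mathrm{id}^{\otimes(r-1)})\Delta^{(r-1)}$.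 The $Moor$-bialgebra is connected if $\ker\Delta\subseteq\mathcal{H}_1$ and $\mathcal{H}=\bigcup_{r\geq 1}\ker\Delta^{(r)}$. *)

From HB Require Import structures.
From mathcomp Require Import all_boot all_order all_algebra.
From mathcomp Require Import finmap.
From mathcomp Require Import monalg.
Set Implicit Arguments. Unset Strict Implicit. Unset Printing Implicit Defensive.
Import GRing.Theory.
Local Open Scope ring_scope.

(* V is the K-vector space with basis I, i.e. {malg K[I]};
   S(V) = {malg K[{cmonom I}]} (polynomials in the basis vectors);
   Moor(V) = V (x) S(V) is the free K-space on the basis
   e_i (x) m  (i : I, m a monomial), i.e. on the type  I * {cmonom I}.
   Tensor powers of Moor(V) are free on pairs / triples / words of basis
   elements. *)

Section MoorDefs.
Variables (K : fieldType) (I : choiceType).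

Definition MB : choiceType := (I * {cmonom I})%type.
Definition Moor := {malg K[MB]}.
Definition Moor2 := {malg K[(MB * MB)%type]}.
Definition Moor3 := {malg K[(MB * MB * MB)%type]}.
Definition MoorW := {malg K[seq MB]}.

(* grading: e_i (x) m  lies in Moor(V)_{deg m + 1} = V (x) S^{deg m}(V) *)
Definition mdegB (b : MB) : nat := (mdeg b.2).+1.
Definition homog (p : nat) (x : Moor) : Prop :=
  forall b, b \in msupp x -> mdegB b = p.

Definition eproj (x : Moor) : Moor :=
  \sum_(b <- msupp x | mdeg b.2 == 0%N) << x@_b *g b >>.

(* the free Moor product, bilinear extension of
   (v (x) w) < (v' (x) 1)  = v (x) (w v'),  (v (x) w) < (v' (x) w') = 0 if deg w' >= 1 *)
Definition prec_basis (b c : MB) : Moor :=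
  if c.2 == @onecm I then << (b.1, mulcm b.2 (ucm c.1)) >> else 0.
Definition prec (x y : Moor) : Moor :=
  \sum_(b <- msupp x) \sum_(c <- msupp y) (x@_b * y@_c) *: prec_basis b c.

Definition tens (x y : Moor) : Moor2 :=
  \sum_(b <- msupp x) \sum_(c <- msupp y) (x@_b * y@_c) *: << (b, c) >>.

Section WithDelta.
Variable D : Moor -> Moor2.
Definition Db (b : MB) : Moor2 := D << b >>.

Definition id_tens_D (z : Moor2) : Moor3 :=
  \sum_(p <- msupp z) z@_p *:
     \sum_(q <- msupp (Db p.2)) (Db p.2)@_q *: << (p.1, q.1, q.2) >>.
Definition D_tens_id (z : Moor2) : Moor3 :=
  \sum_(p <- msupp z) z@_p *:
     \sum_(q <- msupp (Db p.1)) (Db p.1)@_q *: << (q.1, q.2, p.2) >>.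
Definition id_tens_tau (t : Moor3) : Moor3 :=
  \sum_(p <- msupp t) t@_p *: << (p.1.1, p.2, p.1.2) >>.

Definition prec_left (z : Moor2) (y : Moor) : Moor2 :=
  \sum_(p <- msupp z) z@_p *: tens (prec << p.1 >> y) << p.2 >>.

(* iterated coproducts Delta^(r) : Moor -> Moor^{(x)(r+1)} as words *)
Definition toW2 (z : Moor2) : MoorW :=
  \sum_(p <- msupp z) z@_p *: << [:: p.1; p.2] >>.
Definition D_first (w : MoorW) : MoorW :=
  \sum_(s <- msupp w) w@_s *:
     (match s with
      | b :: t => \sum_(q <- msupp (Db b)) (Db b)@_q *: << q.1 :: q.2 :: t >>
      | [::] => 0
      end).
Fixpoint Diter (r : nat) (x : Moor) : MoorW :=
  match r with
  | 0 => 0   (* unused *)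
  | 1 => toW2 (D x)
  | r'.+1 => D_first (Diter r' x)
  end.
End WithDelta.

Definition is_Moor_bialgebra (D : Moor -> Moor2) : Prop :=
  (forall a x y z, prec (a *: x + y) z = a *: prec x z + prec y z) /\
  (forall a x y z, prec x (a *: y + z) = a *: prec x y + prec x z) /\
  (forall p q x y, homog p x -> homog q y -> homog (p + q) (prec x y)) /\
  (forall x y z, prec (prec x y) z = prec (prec x z) y) /\
  (forall x y z, prec x (prec y z) = 0) /\
  (forall a x y, D (a *: x + y) = a *: D x + D y) /\
  (forall x, id_tens_D D (D x) = 0) /\
  (forall x, D_tens_id D (D x) = id_tens_tau (D_tens_id D (D x))) /\
  (forall x y, D (prec x y) = tens x (eproj y) + prec_left (D x) y).

Definition Moor_connected (D : Moor -> Moor2) : Prop :=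
  (forall x, D x = 0 -> homog 1 x) /\
  (forall x, exists r, (1 <= r)%N /\ Diter D r x = 0).

End MoorDefs.

From HB Require Import structures.
From mathcomp Require Import all_boot all_order all_algebra.
From mathcomp Require Import finmap monalg.
Set Implicit Arguments. Unset Strict Implicit. Unset Printing Implicit Defensive.
Import GRing.Theory.
Local Open Scope ring_scope.

(* The coproduct sends [v (x) w] to [sum_k (v (x) d_k w) (x) (x_k (x) 1)], where
   [d_k] is the partial derivative in the basis vector [x_k].  The compatibility
   with [<] is the Leibniz rule for [d_k], coassociativity up to the flip is the
   symmetry of second derivatives, and [(id (x) D) D = 0] because [D] kills
   [V = Moor(V)_1].  Connectedness: [D] lowers the degree of the first tensor
   factor, so iterated coproducts vanish; and [x_(1) < x_(2) = (n - 1) x] on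
   [Moor(V)_n] (Euler's identity), so in characteristic zero [D x = 0] forces
   [x] into [Moor(V)_1]. *)

Section LinearFunction.
Variables (R : pzRingType) (U V : lmodType R) (F : U -> V).
Hypothesis linF : linear F.

Lemma linear_funD : {morph F : x y / x + y}.
Proof. exact: (GRing.semilinear_linear linF).2. Qed.

Lemma linear_funZ : scalable F.
Proof. exact: GRing.scalable_linear linF. Qed.

Lemma linear_fun0 : F 0 = 0.
Proof. by rewrite -[0 in LHS](scale0r 0) linear_funZ scale0r. Qed.

Lemma linear_fun_sum (J : Type) (r : seq J) (G : J -> U) :
  F (\sum_(j <- r) G j) = \sum_(j <- r) F (G j).
Proof. exact: (big_morph F linear_funD linear_fun0). Qed.

End LinearFunction.

Lemma linear_comp (R : pzRingType) (U V W : lmodType R) (F : U -> V) (G : V -> W) :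
  linear F -> linear G -> linear (G \o F).
Proof. by move=> linF linG a x y /=; rewrite linF linG. Qed.

Lemma linear_add (R : pzRingType) (U V : lmodType R) (F G : U -> V) :
  linear F -> linear G -> linear (F \+ G).
Proof. by move=> linF linG a x y /=; rewrite linF linG scalerDr addrACA. Qed.

Fact mbasis_key : unit. Proof. by []. Qed.

(* A locked copy of [<< k >>]; the lock sits on the function so that failed
   unifications [mbasis k =?= mbasis k'] stop at [k =?= k'] instead of
   unfolding finite-map computations. *)
Definition mbasis (R : ringType) (X : choiceType) : X -> {malg R[X]} :=
  locked_with mbasis_key (fun k => << k >>).
Arguments mbasis {R X} k.

Lemma mbasisE (R : ringType) (X : choiceType) (k : X) : mbasis k = << k >> :> {malg R[X]}.
Proof. by rewrite /mbasis unlock. Qed.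

Section LinearExtension.
Variables (R : comRingType) (X : choiceType) (M : lmodType R).
Implicit Types (f g : X -> M) (x : {malg R[X]}).

Definition malg_lift f x : M := \sum_(b <- msupp x) x@_b *: f b.

Lemma malg_liftEw f x (d : {fset X}) : (msupp x `<=` d)%fset ->
  malg_lift f x = \sum_(b <- d) x@_b *: f b.
Proof.
move=> le_xd; rewrite /malg_lift (big_fset_incl _ le_xd) // => b _ xb.
by rewrite mcoeff_outdom // scale0r.
Qed.

Lemma malg_lift_linear f : linear (malg_lift f).
Proof.
move=> a x y; pose d := (msupp x `|` msupp y `|` msupp (a *: x + y))%fset.
rewrite !(@malg_liftEw _ _ d) ?scaler_sumr -?big_split /=;
  try by apply/fsubsetP => b bz; rewrite !in_fsetU bz ?orbT.
by apply: eq_bigr => b _; rewrite mcoeffD mcoeffZ scalerDl scalerA.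
Qed.

Lemma malg_liftU f b : malg_lift f (mbasis b) = f b.
Proof. by rewrite mbasisE /malg_lift msuppU oner_eq0 big_seq_fset1 mcoeffUU scale1r. Qed.

Lemma eq_malg_lift f g x : {in msupp x, f =1 g} -> malg_lift f x = malg_lift g x.
Proof. by move=> efg; rewrite /malg_lift !big_seq; apply: eq_bigr => b /efg ->. Qed.

Lemma malg_lift_combl a f g x :
  malg_lift (fun b => a *: f b + g b) x = a *: malg_lift f x + malg_lift g x.
Proof.
rewrite /malg_lift scaler_sumr -big_split; apply: eq_bigr => b _.
by rewrite scalerDr !scalerA mulrC.
Qed.

Lemma malg_lift_basis (F : {malg R[X]} -> M) :
  linear F -> F =1 malg_lift (fun b => F (mbasis b)).
Proof.
move=> linF x; rewrite {1}[x]monalgE (linear_fun_sum linF).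
apply: eq_bigr => b _; rewrite -linear_funZ // mbasisE; congr F.
by apply/malgP => c; rewrite mcoeffZ !mcoeffU mulr_natr.
Qed.

Lemma linear_malg_ext (F G : {malg R[X]} -> M) : linear F -> linear G ->
  (forall b, F (mbasis b) = G (mbasis b)) -> F =1 G.
Proof.
move=> linF linG eFG x; rewrite (malg_lift_basis linF) (malg_lift_basis linG).
by apply: eq_malg_lift => b _.
Qed.

Lemma linear_malg_eq0 (F : {malg R[X]} -> M) :
  linear F -> (forall b, F (mbasis b) = 0) -> F =1 (fun=> 0).
Proof.
move=> linF F0; apply: linear_malg_ext => // a x y.
by rewrite scaler0 addr0.
Qed.

End LinearExtension.

Lemma mcoeff_malg_lift_diag (R : comRingType) (X : choiceType) (c : X -> R)
    (x : {malg R[X]}) b :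
  (malg_lift (fun b => c b *: mbasis b) x)@_b = x@_b * c b.
Proof.
rewrite /malg_lift raddf_sum /=.
under eq_bigr => b' _ do rewrite !mcoeffZ mbasisE mcoeffU mulr_natr.
case: (boolP (b \in msupp x)) => xb.
  rewrite (bigD1_seq b xb (fset_uniq _)) /= eqxx big1 ?addr0 // => b' /negbTE ->.
  by rewrite mulr0.
rewrite (mcoeff_outdom xb) mul0r big1_seq // => b' /andP[_ xb'].
by case: eqP xb' xb => [-> ->|]; rewrite ?mulr0.
Qed.

Section SupportBound.
Variable R : comRingType.

Lemma msupp_sum_sub (X : choiceType) (J : Type) (r : seq J) (Q : pred J)
    (G : J -> {malg R[X]}) (P : pred X) :
  (forall j, Q j -> {subset msupp (G j) <= P}) ->
  {subset msupp (\sum_(j <- r | Q j) G j) <= P}.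
Proof.
move=> sub_G; elim/big_ind: _ => [|x y sub_x sub_y|j /sub_G //].
  by move=> b; rewrite msupp0.
by move=> b /(fsubsetP (msuppD_le x y)); rewrite in_fsetU => /orP[/sub_x|/sub_y].
Qed.

Lemma msupp_malg_lift_sub (X Y : choiceType) (f : X -> {malg R[Y]})
    (x : {malg R[X]}) (P : pred Y) :
  (forall b, b \in msupp x -> {subset msupp (f b) <= P}) ->
  {subset msupp (malg_lift f x) <= P}.
Proof.
move=> sub_f; rewrite /malg_lift big_seq; apply: msupp_sum_sub => b xb c.
by move/(fsubsetP (msuppZ_le _ _)); apply: sub_f.
Qed.

End SupportBound.

Section Monomials.
Variable I : choiceType.
Implicit Types (m : {cmonom I}) (i k l : I).

Lemma mdeg_mulcmU m i : mdeg (mulcm m (ucm i)) = (mdeg m).+1.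
Proof. by have := @mdegM I m (ucm i); rewrite mdegU addn1. Qed.

Lemma mulcmU_eq1 m i : (mulcm m (ucm i) == @onecm I) = false.
Proof. by apply/negbTE/eqP => /(congr1 mdeg); rewrite mdeg_mulcmU mdeg1. Qed.

Lemma finsupp_mulcmU m i : finsupp (mulcm m (ucm i)) = (finsupp m `|` [fset i])%fset.
Proof.
apply/fsetP => k; rewrite in_fsetU in_fset1 -!cmE_neq0 mulcmE ucmE addn_eq0 negb_and.
by rewrite (eq_sym k); case: (i == k); rewrite ?orbT ?orbF.
Qed.

Lemma finsupp_divcmU m k : (finsupp (divcm m (ucm k)) `<=` finsupp m)%fset.
Proof.
by apply/fsubsetP => l; rewrite -!cmE_neq0 divcmE; apply: contra => /eqP ->.
Qed.

Lemma divcmUK m k : k \in finsupp m -> mulcm (divcm m (ucm k)) (ucm k) = m.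
Proof.
rewrite -cmE_neq0 => mk; apply/eqP/cmP => l; rewrite mulcmE divcmE ucmE.
by case: eqP => [<-|_]; rewrite ?subnK ?lt0n // subn0 addn0.
Qed.

Lemma mulcmUK m i : divcm (mulcm m (ucm i)) (ucm i) = m.
Proof. by apply/eqP/cmP => l; rewrite divcmE mulcmE addnK. Qed.

Lemma divcm_mulcmU m i k : i != k ->
  divcm (mulcm m (ucm i)) (ucm k) = mulcm (divcm m (ucm k)) (ucm i).
Proof.
move=> ik; apply/eqP/cmP => l; rewrite !(divcmE, mulcmE, ucmE).
case: (i =P l) => [<-|_]; last by rewrite !addn0.
by rewrite eq_sym (negbTE ik) !subn0.
Qed.

Lemma mulcmUC m i k : mulcm (mulcm m (ucm i)) (ucm k) = mulcm (mulcm m (ucm k)) (ucm i).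
Proof. by rewrite -!mulcmA (mulcmC (ucm i)). Qed.

Lemma divcmUC m k l :
  divcm (divcm m (ucm k)) (ucm l) = divcm (divcm m (ucm l)) (ucm k).
Proof. by apply/eqP/cmP => t; rewrite !divcmE -!subnDA addnC. Qed.

(* Symmetry of the second partial derivatives of the monomial [m]. *)
Lemma mul_divcmUC m k l : (m l * divcm m (ucm l) k = m k * divcm m (ucm k) l)%N.
Proof.
rewrite !divcmE !ucmE; have [-> //|lk] := eqVneq l k.
by rewrite !subn0 mulnC.
Qed.

End Monomials.

Section FreeMoorAlgebra.
Variables (K : fieldType) (I : choiceType).
Local Notation MB := (MB I).
Local Notation Moor := (Moor K I).
Local Notation Moor2 := (Moor2 K I).
Local Notation prec_basis := (@prec_basis K I).
Implicit Types (x y : Moor) (b c : MB).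

Lemma prec_basisE b c : prec_basis b c =
  if c.2 == @onecm I then mbasis (b.1, mulcm b.2 (ucm c.1)) else 0.
Proof. by rewrite mbasisE. Qed.

Lemma prec_liftE x y : prec x y = malg_lift (fun b => malg_lift (prec_basis b) y) x.
Proof.
apply: eq_bigr => b _; rewrite scaler_sumr.
by apply: eq_bigr => c _; rewrite scalerA.
Qed.

Lemma prec_linearl y : linear (fun x => prec x y).
Proof. by move=> a x x'; rewrite !prec_liftE malg_lift_linear. Qed.

Lemma prec_linearr x : linear (prec x).
Proof.
move=> a y y'; rewrite !prec_liftE -malg_lift_combl.
by apply: eq_malg_lift => b _; rewrite malg_lift_linear.
Qed.

Lemma precUU b c : prec (mbasis b) (mbasis c) = prec_basis b c.
Proof. by rewrite prec_liftE !malg_liftU. Qed.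

Lemma tens_liftE x y :
  tens x y = malg_lift (fun b => malg_lift (fun c => mbasis (b, c)) y) x.
Proof.
apply: eq_bigr => b _; rewrite scaler_sumr.
by apply: eq_bigr => c _; rewrite scalerA mbasisE.
Qed.

Lemma tens_linearl y : linear (fun x => tens x y).
Proof. by move=> a x x'; rewrite !tens_liftE malg_lift_linear. Qed.

Lemma tens_linearr x : linear (tens x).
Proof.
move=> a y y'; rewrite !tens_liftE -malg_lift_combl.
by apply: eq_malg_lift => b _; rewrite malg_lift_linear.
Qed.

Lemma tensUU b c : tens (mbasis b) (mbasis c) = mbasis (b, c) :> Moor2.
Proof. by rewrite tens_liftE !malg_liftU. Qed.

Lemma eproj_liftE y :
  eproj y = malg_lift (fun c => if mdeg c.2 == 0%N then mbasis c else 0) y.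
Proof.
rewrite /eproj /malg_lift big_mkcond; apply: eq_bigr => c _.
case: ifP => _; rewrite ?scaler0 // mbasisE.
by apply/malgP => d; rewrite mcoeffZ !mcoeffU mulr_natr.
Qed.

Lemma eproj_linear : linear (@eproj K I).
Proof. by move=> a y y'; rewrite !eproj_liftE malg_lift_linear. Qed.

Lemma eprojU c : eproj (mbasis c) = if mdeg c.2 == 0%N then mbasis c else 0 :> Moor.
Proof. by rewrite eproj_liftE malg_liftU. Qed.

Lemma prec_left_linearl y : linear (fun z : Moor2 => prec_left z y).
Proof. exact: malg_lift_linear. Qed.

Lemma prec_left_linearr (z : Moor2) : linear (prec_left z).
Proof.
move=> a y y'; rewrite -[RHS]malg_lift_combl.
by apply: eq_malg_lift => p _ /=; rewrite prec_linearr tens_linearl.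
Qed.

Lemma prec_leftU (p : MB * MB) y :
  prec_left (mbasis p) y = tens (prec (mbasis p.1) y) (mbasis p.2).
Proof.
transitivity (tens (prec << p.1 >> y) << p.2 >>); first exact: malg_liftU.
by rewrite !mbasisE.
Qed.

Lemma prec_homog p q x y : homog p x -> homog q y -> homog (p + q) (prec x y).
Proof.
move=> hx hy; suff sub : {subset msupp (prec x y) <= [pred b | mdegB b == (p + q)%N]}.
  by move=> b /sub /eqP.
rewrite prec_liftE; apply: msupp_malg_lift_sub => b xb.
apply: msupp_malg_lift_sub => c yc.
rewrite /prec_basis; case: eqP => [c1|_] d; last by rewrite msupp0.
rewrite msuppU oner_eq0 in_fset1 => /eqP -> /=.
by rewrite inE /mdegB mdeg_mulcmU -(hx b xb) -(hy c yc) /mdegB c1 mdeg1 addn1.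
Qed.

Lemma prec0l y : prec 0 y = 0 :> Moor.
Proof. exact: linear_fun0 (prec_linearl y). Qed.

Lemma prec0r x : prec x 0 = 0.
Proof. exact: linear_fun0 (prec_linearr x). Qed.

Lemma prec_rcomm x y z : prec (prec x y) z = prec (prec x z) y.
Proof.
move: x; apply: (linear_malg_ext (F := fun x => prec (prec x y) z)
  (G := fun x => prec (prec x z) y)) => [||b].
- exact: linear_comp (prec_linearl y) (prec_linearl z).
- exact: linear_comp (prec_linearl z) (prec_linearl y).
move: y; apply: (linear_malg_ext (F := fun y => prec (prec (mbasis b) y) z)
  (G := prec (prec (mbasis b) z))) => [||c].
- exact: linear_comp (prec_linearr _) (prec_linearl z).
- exact: prec_linearr.
move: z; apply: (linear_malg_ext (F := prec (prec (mbasis b) (mbasis c)))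
  (G := fun z => prec (prec (mbasis b) z) (mbasis c))) => [||d].
- exact: prec_linearr.
- exact: linear_comp (prec_linearr _) (prec_linearl _).
rewrite !precUU !prec_basisE.
case: eqP => [c1|c1]; case: eqP => [d1|d1]; rewrite ?prec0l // !precUU !prec_basisE /=.
- by rewrite c1 d1 eqxx mulcmUC.
- by case: eqP.
- by case: eqP.
Qed.

Lemma prec_nil x y z : prec x (prec y z) = 0.
Proof.
move: x; apply: (linear_malg_eq0 (F := fun x => prec x (prec y z))) => [|b].
  exact: prec_linearl.
move: y; apply: (linear_malg_eq0 (F := fun y => prec (mbasis b) (prec y z))) => [|c].
  exact: linear_comp (prec_linearl z) (prec_linearr _).
move: z; apply: (linear_malg_eq0 (F := fun z => prec (mbasis b) (prec (mbasis c) z)))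
  => [|d].
  exact: linear_comp (prec_linearr _) (prec_linearr _).
rewrite precUU prec_basisE; case: eqP => _; last exact: prec0r.
by rewrite precUU prec_basisE /= mulcmU_eq1.
Qed.

End FreeMoorAlgebra.

Section Coproduct.
Variables (K : fieldType) (I : choiceType).
Local Notation MB := (MB I).
Local Notation Moor := (Moor K I).
Local Notation Moor2 := (Moor2 K I).
Local Notation Moor3 := (Moor3 K I).
Local Notation one := (@onecm I).
Local Notation prec_basis := (@prec_basis K I).
Implicit Types (x y : Moor) (b : MB) (m : {cmonom I}).

(* [(m k) * (m / x_k)] is the partial derivative [d_k m]. *)
Definition coprod_basis b : Moor2 :=
  \sum_(k <- finsupp b.2) (b.2 k)%:R *: mbasis ((b.1, divcm b.2 (ucm k)), (k, one)).

Definition coprod : Moor -> Moor2 := malg_lift coprod_basis.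

Lemma coprod_linear : linear coprod.
Proof. exact: malg_lift_linear. Qed.

Lemma coprodU b : coprod (mbasis b) = coprod_basis b.
Proof. exact: malg_liftU. Qed.

Lemma Db_coprod b : Db coprod b = coprod_basis b.
Proof. by rewrite /Db -mbasisE coprodU. Qed.

Lemma coprod_basis_deg0 i : coprod_basis (i, one) = 0.
Proof. by rewrite /coprod_basis mdom1 big_seq_fset0. Qed.

Lemma id_tens_D_linear D : linear (@id_tens_D K I D).
Proof. exact: malg_lift_linear. Qed.

Lemma D_tens_id_linear D : linear (@D_tens_id K I D).
Proof. exact: malg_lift_linear. Qed.

Lemma id_tens_tau_linear : linear (@id_tens_tau K I).
Proof. exact: malg_lift_linear. Qed.

Lemma id_tens_coprodU (p : MB * MB) : id_tens_D coprod (mbasis p) =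
  malg_lift (fun q : MB * MB => mbasis (p.1, q.1, q.2)) (coprod_basis p.2).
Proof.
rewrite -Db_coprod; transitivity (malg_lift (fun q : MB * MB => << (p.1, q.1, q.2) >>)
  (Db coprod p.2) : Moor3); first exact: malg_liftU.
by apply: eq_malg_lift => q _; rewrite mbasisE.
Qed.

Lemma coprod_tens_idU (p : MB * MB) : D_tens_id coprod (mbasis p) =
  malg_lift (fun q : MB * MB => mbasis (q.1, q.2, p.2)) (coprod_basis p.1).
Proof.
rewrite -Db_coprod; transitivity (malg_lift (fun q : MB * MB => << (q.1, q.2, p.2) >>)
  (Db coprod p.1) : Moor3); first exact: malg_liftU.
by apply: eq_malg_lift => q _; rewrite mbasisE.
Qed.

Lemma id_tens_tauU (t : MB * MB * MB) :
  id_tens_tau (mbasis t) = mbasis (t.1.1, t.2, t.1.2) :> Moor3.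
Proof.
transitivity (<< (t.1.1, t.2, t.1.2) >> : Moor3); first exact: malg_liftU.
by rewrite mbasisE.
Qed.

Lemma coprod_id_tens_coprod x : id_tens_D coprod (coprod x) = 0.
Proof.
move: x; apply: (linear_malg_eq0 (F := fun x => id_tens_D coprod (coprod x))).
  exact: linear_comp coprod_linear (id_tens_D_linear _).
move=> b; rewrite coprodU (linear_fun_sum (id_tens_D_linear _)) big1 // => k _.
rewrite (linear_funZ (id_tens_D_linear _)) id_tens_coprodU /= coprod_basis_deg0.
by rewrite (linear_fun0 (malg_lift_linear _)) scaler0.
Qed.

Lemma coprod_coprod_basis j m : D_tens_id coprod (coprod_basis (j, m)) =
  \sum_(k <- finsupp m) \sum_(l <- finsupp m) (m k * divcm m (ucm k) l)%:R *:
     mbasis ((j, divcm (divcm m (ucm k)) (ucm l)), (l, one), (k, one)).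
Proof.
rewrite (linear_fun_sum (D_tens_id_linear _)); apply: eq_bigr => k _ /=.
rewrite (linear_funZ (D_tens_id_linear _)) coprod_tens_idU /=.
rewrite (linear_fun_sum (malg_lift_linear _)) scaler_sumr.
rewrite -(big_fset_incl _ (finsupp_divcmU m k)) => [|l _]; last first.
  by rewrite -cmE_eq0 natrM => /eqP ->; rewrite mulr0 scale0r.
apply: eq_bigr => l _; rewrite (linear_funZ (malg_lift_linear _)) malg_liftU.
by rewrite scalerA natrM.
Qed.

Lemma coprod_coassoc x :
  D_tens_id coprod (coprod x) = id_tens_tau (D_tens_id coprod (coprod x)).
Proof.
move: x; apply: (linear_malg_ext (F := fun x => D_tens_id coprod (coprod x))
  (G := fun x => id_tens_tau (D_tens_id coprod (coprod x)))).
- exact: linear_comp coprod_linear (D_tens_id_linear _).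
- exact: linear_comp (linear_comp coprod_linear (D_tens_id_linear _)) id_tens_tau_linear.
case=> j m; rewrite coprodU coprod_coprod_basis.
rewrite (linear_fun_sum id_tens_tau_linear) exchange_big /=.
apply: eq_bigr => l _; rewrite (linear_fun_sum id_tens_tau_linear).
apply: eq_bigr => k _; rewrite (linear_funZ id_tens_tau_linear) id_tens_tauU /=.
by rewrite mul_divcmUC divcmUC.
Qed.

(* The Leibniz rule for [d_k (m x_i)]. *)
Lemma coprod_basis_mulcmU j m i :
  coprod_basis (j, mulcm m (ucm i)) = mbasis ((j, m), (i, one)) +
    \sum_(k <- finsupp m)
       (m k)%:R *: mbasis ((j, mulcm (divcm m (ucm k)) (ucm i)), (k, one)).
Proof.
rewrite /coprod_basis /= finsupp_mulcmU.
under eq_bigr => k _ do rewrite mulcmE ucmE natrD scalerDl.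
rewrite big_split /= addrC.
have i_in : i \in (finsupp m `|` [fset i])%fset by rewrite in_fsetU in_fset1 eqxx orbT.
rewrite (bigD1_seq i i_in (fset_uniq _)) /= eqxx scale1r (mulcmUK m i) big1 ?addr0;
  last by move=> k /negbTE; rewrite eq_sym => ->; rewrite scale0r.
rewrite [in RHS](big_fset_incl _ (fsubsetUl _ [fset i]%fset)) => [|k _]; last first.
  by rewrite -cmE_eq0 => /eqP ->; rewrite scale0r.
apply: (congr1 (GRing.add _)); apply: eq_bigr => k _.
have [<-|ik] := eqVneq i k; last by rewrite (divcm_mulcmU m ik).
case: (boolP (i \in finsupp m)) => [im|]; first by rewrite (mulcmUK m i) (divcmUK im).
by rewrite -cmE_eq0 => /eqP ->; rewrite !scale0r.
Qed.

Lemma coprod_prec x y :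
  coprod (prec x y) = tens x (eproj y) + prec_left (coprod x) y.
Proof.
move: x; apply: (linear_malg_ext (F := fun x => coprod (prec x y))
  (G := fun x => tens x (eproj y) + prec_left (coprod x) y)) => [||[j m]].
- exact: linear_comp (prec_linearl y) coprod_linear.
- exact: linear_add (tens_linearl _) (linear_comp coprod_linear (prec_left_linearl y)).
move: y; apply: (linear_malg_ext (F := fun y => coprod (prec (mbasis (j, m)) y))
  (G := fun y => tens (mbasis (j, m)) (eproj y) + prec_left (coprod (mbasis (j, m))) y))
  => [||[i n]].
- exact: linear_comp (prec_linearr _) coprod_linear.
- exact: linear_add (linear_comp (@eproj_linear K I) (tens_linearr _))
    (prec_left_linearr _).
rewrite precUU prec_basisE eprojU coprodU /=.
rewrite /coprod_basis (linear_fun_sum (prec_left_linearl _)).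
under eq_bigr => k _ do
  rewrite (linear_funZ (prec_left_linearl _)) prec_leftU precUU prec_basisE /=.
case: eqP => [->|n1].
  rewrite mdeg1 eqxx coprodU tensUU (coprod_basis_mulcmU j m i).
  by under eq_bigr do rewrite tensUU.
rewrite mdeg_eq0 (introF eqP n1) (linear_fun0 coprod_linear).
rewrite (linear_fun0 (tens_linearr _)) add0r big1 // => k _.
by rewrite (linear_fun0 (tens_linearl _)) scaler0.
Qed.

Definition prec_tens (z : Moor2) : Moor := malg_lift (fun p => prec_basis p.1 p.2) z.

Lemma prec_tens_linear : linear prec_tens.
Proof. exact: malg_lift_linear. Qed.

(* Euler's identity: [x_(1) < x_(2)] multiplies [v (x) w] by the degree of [w]. *)
Lemma prec_tens_coprod x :
  prec_tens (coprod x) = malg_lift (fun b => (mdeg b.2)%:R *: mbasis b) x.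
Proof.
move: x; apply: (linear_malg_ext (F := fun x => prec_tens (coprod x))) => [||[j m]].
- exact: linear_comp coprod_linear prec_tens_linear.
- exact: malg_lift_linear.
rewrite coprodU malg_liftU /coprod_basis (linear_fun_sum prec_tens_linear) /= mdegE.
rewrite natr_sum scaler_suml big_seq [RHS]big_seq; apply: eq_bigr => k mk.
rewrite (linear_funZ prec_tens_linear) /prec_tens malg_liftU prec_basisE /=.
by rewrite eqxx (divcmUK mk).
Qed.

Lemma coprod_eq0_homog1 (charK0 : [pchar K] =i pred0) x : coprod x = 0 -> homog 1 x.
Proof.
move=> x0 b xb; have /(congr1 (mcoeff b)) := prec_tens_coprod x.
rewrite x0 (linear_fun0 prec_tens_linear) mcoeff0 mcoeff_malg_lift_diag.
move/esym/eqP; rewrite mulf_eq0 mcoeff_eq0 xb /= ((pcharf0P K).1 charK0).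
by rewrite /mdegB => /eqP ->.
Qed.

Definition head_mdeg (s : seq MB) : nat := if s is b :: _ then mdeg b.2 else 0.

Lemma msupp_coprod_basis b :
  {subset msupp (coprod_basis b) <= [pred q : MB * MB | (mdeg q.1.2 < mdeg b.2)%N]}.
Proof.
case: b => j m; rewrite /coprod_basis big_seq.
apply: msupp_sum_sub => k mk q /(fsubsetP (msuppZ_le _ _)).
rewrite mbasisE msuppU oner_eq0 in_fset1 => /eqP -> /=.
by rewrite inE -[X in (_ < mdeg X)%N](divcmUK mk) mdeg_mulcmU.
Qed.

Lemma msupp_D_first_coprod n r (w : MoorW K I) :
  {subset msupp w <= [pred s | (head_mdeg s + r < n)%N]} ->
  {subset msupp (D_first coprod w) <= [pred s | (head_mdeg s + r.+1 < n)%N]}.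
Proof.
move=> sub_w; apply: msupp_malg_lift_sub => -[|b t] /sub_w; rewrite inE /= => lt_b.
  by move=> s; rewrite msupp0.
apply: msupp_malg_lift_sub => q; rewrite Db_coprod => /msupp_coprod_basis lt_q s.
rewrite msuppU oner_eq0 in_fset1 => /eqP -> /=; rewrite inE /= addnS.
exact: leq_ltn_trans (leq_add lt_q (leqnn r)) lt_b.
Qed.

Lemma msupp_Diter_coprod x n r : (forall b, b \in msupp x -> (mdeg b.2 <= n)%N) ->
  {subset msupp (Diter coprod r.+1 x) <= [pred s | (head_mdeg s + r < n)%N]}.
Proof.
move=> le_x; elim: r => [|r IH]; last exact: msupp_D_first_coprod IH.
have sub_x : {subset msupp (coprod x) <= [pred q : MB * MB | (mdeg q.1.2 < n)%N]}.
  apply: msupp_malg_lift_sub => b /le_x le_b q /msupp_coprod_basis.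
  by rewrite !inE => /leq_trans; apply.
apply: msupp_malg_lift_sub => p /sub_x lt_p s.
by rewrite msuppU oner_eq0 in_fset1 => /eqP -> /=; rewrite inE addn0.
Qed.

Lemma Diter_coprod_eq0 x : exists r, (1 <= r)%N /\ Diter coprod r x = 0.
Proof.
pose n := \max_(b <- msupp x) mdeg b.2.
have le_x b : b \in msupp x -> (mdeg b.2 <= n)%N.
  by move=> xb; apply: (leq_bigmax_seq (F := fun b : MB => mdeg b.2)).
exists n.+1; split => //; apply/malgP => s; rewrite mcoeff0 mcoeff_outdom //.
by apply/negP => /(msupp_Diter_coprod le_x); rewrite inE ltnNge leq_addl.
Qed.

End Coproduct.

Lemma coprod_Moor_bialgebra (K : fieldType) (I : choiceType) :
  is_Moor_bialgebra (@coprod K I).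
Proof.
split; first by move=> a x y z; apply: prec_linearl.
split; first by move=> a x y z; apply: prec_linearr.
split; first exact: prec_homog.
split; first exact: prec_rcomm.
split; first exact: prec_nil.
split; first exact: coprod_linear.
split; first exact: coprod_id_tens_coprod.
split; [exact: coprod_coassoc | exact: coprod_prec].
Qed.

Lemma coprod_Moor_connected (K : fieldType) (I : choiceType) :
  [pchar K] =i pred0 -> Moor_connected (@coprod K I).
Proof. by move=> charK0; split; [exact: coprod_eq0_homog1 | exact: Diter_coprod_eq0]. Qed.

Theorem theorem4p2 (K : fieldType) (I : choiceType)
  (charK0 : [pchar K] =i pred0) :
  exists D : Moor K I -> Moor2 K I,
    is_Moor_bialgebra D /\ Moor_connected D.
Proof.
exists (@coprod K I); split; first exact: coprod_Moor_bialgebra.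
exact: coprod_Moor_connected.
Qed.
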